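(* Let $\Theta=(\alpha,\rho_r,\rho_d,\rho_s,\rho_0,T)$ with $\alpha>1$, $\rho_r,\rho_d,\rho_s,\rho_0>0$, $T>1$, such that $K_{max}(\Theta):=\min\big(\frac T4,\frac{\rho_r}{3\rho_0},\frac{3\rho_d}{2\rho_0}\big)>10$. Then for every $R>0$, $\zeta'_{zf}(R,\Theta)<\zeta'_{csi}(R,\Theta)$.
   Context: For reals $M>K$, $1\le K\le\tau<T$, $$\gamma_u=\frac{K+\tau}{2\tau(M-K)}\Big(2^{\frac{R}{K(1-\tau/T)}}-1\Big)+\sqrt{\Big(\frac{K+\tau}{2\tau(M-K)}\Big(2^{\frac{R}{K(1-\tau/T)}}-1\Big)\Big)^2+\frac{2^{\frac{R}{K(1-\tau/T)}}-1}{\tau(M-K)}},$$ $$\frac{R}{\zeta_{zf}(M,K,\tau,R,\Theta)}=\alpha K\gamma_u+\rho_s+K\Big(\rho_d+\frac{8K^2\rho_0}{3T}\Big)+M\Big(\rho_r+2K\rho_0+\frac{4K^2\rho_0}{T}\Big).$$ $\zeta'_{zf}(R,\Theta)$ is the supremum of $\zeta_{zf}$ over real $(M,K,\tau)$ with $1\le K\le K_{max}(\Theta)$, $K\le\tau<T$, $M>K$. For real $M>K\ge1$, $\frac{1}{\zeta_{csi}(M,K,R,\Theta)}=\frac1R\big[\frac{\alpha K}{M-K}(2^{R/K}-1)+M\rho_r+K\rho_d+\rho_s\big]$ and $\zeta'_{csi}(R,\Theta)$ is its maximum over real $(M,K)$ with $1\le K\le K_{max}(\Theta)$, $M>K$.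 *)

From HB Require Import structures.
From mathcomp Require Import all_boot all_order all_algebra.
From mathcomp Require Import all_classical all_reals all_analysis.
Set Implicit Arguments. Unset Strict Implicit. Unset Printing Implicit Defensive.
Import Order.TTheory GRing.Theory Num.Theory.
Local Open Scope ring_scope.
Local Open Scope classical_set_scope.

Section Defs.
Variable R : realType.

Definition gamma_u (T M K tau Rt : R) : R :=
  let e := (2:R) `^ (Rt / (K * (1 - tau / T))) - 1 in
  let a := (K + tau) / (2 * tau * (M - K)) * e in
  a + Num.sqrt (a ^+ 2 + e / (tau * (M - K))).

Definition zeta_zf (alpha rr rd rs r0 T : R) (M K tau Rt : R) : R :=
  Rt / (alpha * K * gamma_u T M K tau Rt + rs
        + K * (rd + 8 * K ^+ 2 * r0 / (3 * T))
        + M * (rr + 2 * K * r0 + 4 * K ^+ 2 * r0 / T)).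

Definition Kmax (alpha rr rd rs r0 T : R) : R :=
  Num.min (T / 4) (Num.min (rr / (3 * r0)) (3 * rd / (2 * r0))).

Definition zeta_zf' (alpha rr rd rs r0 T : R) (Rt : R) : R :=
  sup [set z | exists M K tau : R,
         1 <= K /\ K <= Kmax alpha rr rd rs r0 T /\ K <= tau /\ tau < T /\ K < M
          /\ z = zeta_zf alpha rr rd rs r0 T M K tau Rt].

Definition zeta_csi (alpha rr rd rs r0 T : R) (M K Rt : R) : R :=
  (1 / Rt * (alpha * K / (M - K) * ((2:R) `^ (Rt / K) - 1)
             + M * rr + K * rd + rs))^-1.

Definition zeta_csi' (alpha rr rd rs r0 T : R) (Rt : R) : R :=
  sup [set z | exists M K : R,
         1 <= K /\ K <= Kmax alpha rr rd rs r0 T /\ K < M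
          /\ z = zeta_csi alpha rr rd rs r0 T M K Rt].
End Defs.

From HB Require Import structures.
From mathcomp Require Import all_boot all_order all_algebra.
From mathcomp Require Import all_classical all_reals all_analysis.
From mathcomp Require Import ring lra.
Set Implicit Arguments.
Unset Strict Implicit.
Unset Printing Implicit Defensive.
Import Order.TTheory GRing.Theory Num.Theory.
Local Open Scope ring_scope.

(* For every zero-forcing configuration (M, K, tau), the zero-forcing power
   R / zeta_zf exceeds the perfect-CSI power of (M, K) by at least
   2 M K rho_0 >= 2 rho_0: gamma_u dominates the CSI SNR term
   (2^(R/K) - 1) / (M - K), and all other CSI terms reappear verbatim.  The CSI
   power is at least R / zeta'_csi, so
   zeta'_zf <= R / (R / zeta'_csi + 2 rho_0) < zeta'_csi.
   The bound on K_max is only needed to make (M, K) = (2, 1) feasible, so that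
   both suprema range over nonempty sets. *)

Lemma powR2_ge1 (R : realType) (x : R) : 0 <= x -> 1 <= (2:R) `^ x.
Proof. by move=> x_ge0; have := ler_powR (ler1n R 2) x_ge0; rewrite powRr0. Qed.

Lemma le_sqrt_sqrD (R : rcfType) (a s : R) :
  0 <= a -> 0 <= s -> a <= Num.sqrt (a ^+ 2 + s).
Proof.
move=> a_ge0 s_ge0; rewrite -[leLHS](ger0_norm a_ge0) -sqrtr_sqr.
by rewrite ler_sqrt ?lerDl // addr_ge0 ?sqr_ge0.
Qed.

Lemma ler_div_divD (R : realFieldType) (a c x y : R) :
  0 < a -> 0 <= c -> 0 < x -> x <= y -> a / (a / x + c) <= a / (a / y + c).
Proof.
move=> a_gt0 c_ge0 x_gt0 x_le_y; have y_gt0 := lt_le_trans x_gt0 x_le_y.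
rewrite ler_pM2l // lef_pV2 ?posrE ?ltr_wpDr ?divr_gt0 // lerD2r.
by rewrite ler_pM2l // lef_pV2.
Qed.

Lemma div_divD_lt (R : realFieldType) (a c y : R) :
  0 < a -> 0 < c -> 0 < y -> a / (a / y + c) < y.
Proof.
move=> a_gt0 c_gt0 y_gt0.
rewrite ltr_pdivrMr ?ltr_wpDr ?divr_gt0 ?ltW // mulrDr mulrCA divff ?gt_eqF //.
by rewrite mulr1 ltrDl mulr_gt0.
Qed.

Lemma gamma_u_ge (R : realType) (T M K tau Rt : R) :
  1 <= K -> K <= tau -> tau < T -> K < M -> 0 <= Rt ->
  ((2:R) `^ (Rt / K) - 1) / (M - K) <= gamma_u T M K tau Rt.
Proof.
move=> K_ge1 K_le_tau tau_lt_T K_lt_M Rt_ge0.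
(* gamma_u >= 2 a = (1 + K / tau) e / (M - K), and e >= 2^(Rt/K) - 1
   because the exponent of e is Rt / K divided by 1 - tau / T in (0, 1]. *)
have tau_gt0 : 0 < tau by lra.
have MK_gt0 : 0 < M - K by lra.
set c := 1 - tau / T.
have c_gt0 : 0 < c by rewrite /c subr_gt0 ltr_pdivrMr ?mul1r //; lra.
have c_le1 : c <= 1 by rewrite /c lerBlDr lerDl divr_ge0 //; lra.
set e := (2:R) `^ (Rt / (K * c)) - 1.
have e_ge : (2:R) `^ (Rt / K) - 1 <= e.
  rewrite lerD2r ler_powR ?ler1n // invfM mulrA ler_pdivlMr //.
  by rewrite ler_piMr // divr_ge0 //; lra.
have e_ge0 : 0 <= e.
  by rewrite /e subr_ge0 powR2_ge1 // divr_ge0 ?mulr_ge0 //; lra.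
rewrite /gamma_u -/c -/e.
set a := (K + tau) / (2 * tau * (M - K)) * e.
have a_ge : e / (M - K) <= 2 * a.
  have -> : 2 * a = (K + tau) / tau * (e / (M - K)).
    by rewrite /a; field; rewrite !gt_eqF.
  by rewrite ler_peMl ?divr_ge0 // ?ler_pdivlMr ?mul1r //; lra.
have a_le_sqrt : a <= Num.sqrt (a ^+ 2 + e / (tau * (M - K))).
  apply: le_sqrt_sqrD; last by rewrite divr_ge0 ?mulr_ge0 //; lra.
  have : 0 <= e / (M - K) by rewrite divr_ge0 //; lra.
  lra.
have : ((2:R) `^ (Rt / K) - 1) / (M - K) <= e / (M - K).
  by rewrite ler_pM2r ?invr_gt0.
lra.
Qed.

Definition csi_power (R : realType) (alpha rr rd rs Rt M K : R) : R :=
  alpha * K / (M - K) * ((2:R) `^ (Rt / K) - 1) + M * rr + K * rd + rs.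

Lemma zeta_csiE (R : realType) (alpha rr rd rs r0 T Rt M K : R) :
  zeta_csi alpha rr rd rs r0 T M K Rt = Rt / csi_power alpha rr rd rs Rt M K.
Proof. by rewrite /zeta_csi mul1r invfM invrK. Qed.

Lemma csi_power_ge (R : realType) (alpha rr rd rs Rt M K : R) :
  0 <= alpha -> 0 <= rr -> 0 <= rd -> 0 <= Rt -> 1 <= K -> K < M ->
  rs <= csi_power alpha rr rd rs Rt M K.
Proof.
move=> alpha_ge0 rr_ge0 rd_ge0 Rt_ge0 K_ge1 K_lt_M; rewrite /csi_power.
have : 0 <= M * rr + K * rd by rewrite addr_ge0 ?mulr_ge0 //; lra.
have : 0 <= alpha * K / (M - K) * ((2:R) `^ (Rt / K) - 1).
  by rewrite mulr_ge0 ?divr_ge0 ?mulr_ge0 ?subr_ge0 ?powR2_ge1 ?divr_ge0 //;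
    lra.
lra.
Qed.

Lemma zeta_csi_le (R : realType) (alpha rr rd rs r0 T Rt M K : R) :
  0 <= alpha -> 0 <= rr -> 0 <= rd -> 0 < rs -> 0 <= Rt -> 1 <= K -> K < M ->
  zeta_csi alpha rr rd rs r0 T M K Rt <= Rt / rs.
Proof.
move=> alpha_ge0 rr_ge0 rd_ge0 rs_gt0 Rt_ge0 K_ge1 K_lt_M.
have := csi_power_ge rs alpha_ge0 rr_ge0 rd_ge0 Rt_ge0 K_ge1 K_lt_M.
by rewrite zeta_csiE => rs_le; rewrite ler_wpM2l // lef_pV2 // posrE; lra.
Qed.

Lemma zeta_csi_gt0 (R : realType) (alpha rr rd rs r0 T Rt M K : R) :
  0 <= alpha -> 0 <= rr -> 0 <= rd -> 0 < rs -> 0 < Rt -> 1 <= K -> K < M ->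
  0 < zeta_csi alpha rr rd rs r0 T M K Rt.
Proof.
move=> alpha_ge0 rr_ge0 rd_ge0 rs_gt0 Rt_gt0 K_ge1 K_lt_M.
rewrite zeta_csiE divr_gt0 // (lt_le_trans rs_gt0) //.
exact: csi_power_ge (ltW Rt_gt0) K_ge1 K_lt_M.
Qed.

Lemma zeta_csi_le_sup (R : realType) (alpha rr rd rs r0 T Rt M K : R) :
  0 <= alpha -> 0 <= rr -> 0 <= rd -> 0 < rs -> 0 <= Rt ->
  1 <= K -> K <= Kmax alpha rr rd rs r0 T -> K < M ->
  zeta_csi alpha rr rd rs r0 T M K Rt <= zeta_csi' alpha rr rd rs r0 T Rt.
Proof.
move=> alpha_ge0 rr_ge0 rd_ge0 rs_gt0 Rt_ge0 K_ge1 K_le_Kmax K_lt_M.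
apply: ub_le_sup; last by exists M, K.
exists (Rt / rs) => _ [M' [K' [K'_ge1 [_ [K'_lt_M' ->]]]]].
exact: zeta_csi_le.
Qed.

Lemma zeta_zf_le (R : realType) (alpha rr rd rs r0 T Rt M K tau : R) :
  0 <= alpha -> 0 <= rr -> 0 <= rd -> 0 < rs -> 0 <= r0 -> 0 <= Rt ->
  1 <= K -> K <= tau -> tau < T -> K < M ->
  zeta_zf alpha rr rd rs r0 T M K tau Rt
    <= Rt / (csi_power alpha rr rd rs Rt M K + 2 * r0).
Proof.
move=> alpha_ge0 rr_ge0 rd_ge0 rs_gt0 r0_ge0 Rt_ge0.
move=> K_ge1 K_le_tau tau_lt_T K_lt_M.
have T_gt0 : 0 < T by lra.
have gamma_ge := gamma_u_ge K_ge1 K_le_tau tau_lt_T K_lt_M Rt_ge0.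
set g := gamma_u T M K tau Rt in gamma_ge *.
have snr_le : alpha * K / (M - K) * ((2:R) `^ (Rt / K) - 1) <= alpha * K * g.
  by rewrite -mulrA [_^-1 * _]mulrC ler_wpM2l // mulr_ge0 //; lra.
have MK_ge1 : 1 <= M * K by rewrite -[1]mulr1 ler_pM //; lra.
have pilot_ge0 :
    0 <= K * (8 * K ^+ 2 * r0 / (3 * T)) + M * (4 * K ^+ 2 * r0 / T).
  by rewrite addr_ge0 ?mulr_ge0 ?invr_ge0 //; lra.
have power_ge : csi_power alpha rr rd rs Rt M K + 2 * r0 <= alpha * K * g + rs
    + K * (rd + 8 * K ^+ 2 * r0 / (3 * T))
    + M * (rr + 2 * K * r0 + 4 * K ^+ 2 * r0 / T).
  rewrite /csi_power; nra.
have csi_gt0 : 0 < csi_power alpha rr rd rs Rt M K + 2 * r0.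
  by have := csi_power_ge rs alpha_ge0 rr_ge0 rd_ge0 Rt_ge0 K_ge1 K_lt_M; lra.
by rewrite /zeta_zf -/g ler_wpM2l // lef_pV2 // posrE; lra.
Qed.

Lemma zeta_zf_le_zeta_csi (R : realType) (alpha rr rd rs r0 T Rt M K tau : R) :
  0 <= alpha -> 0 <= rr -> 0 <= rd -> 0 < rs -> 0 <= r0 -> 0 < Rt ->
  1 <= K -> K <= tau -> tau < T -> K < M ->
  zeta_zf alpha rr rd rs r0 T M K tau Rt
    <= Rt / (Rt / zeta_csi alpha rr rd rs r0 T M K Rt + 2 * r0).
Proof.
move=> alpha_ge0 rr_ge0 rd_ge0 rs_gt0 r0_ge0 Rt_gt0.
move=> K_ge1 K_le_tau tau_lt_T K_lt_M.
rewrite zeta_csiE invf_div mulrCA divff ?gt_eqF // mulr1.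
exact: zeta_zf_le (ltW Rt_gt0) K_ge1 K_le_tau tau_lt_T K_lt_M.
Qed.

Theorem lemma8 (R : realType) (alpha rr rd rs r0 T : R)
  (halpha : 1 < alpha) (hrr : 0 < rr) (hrd : 0 < rd) (hrs : 0 < rs)
  (hr0 : 0 < r0) (hT : 1 < T) (hK : 10 < Kmax alpha rr rd rs r0 T) :
  forall Rt : R, 0 < Rt ->
    zeta_zf' alpha rr rd rs r0 T Rt < zeta_csi' alpha rr rd rs r0 T Rt.
Proof.
move=> Rt Rt_gt0.
have [alpha_ge0 rr_ge0 rd_ge0 r0_ge0 Rt_ge0] :
  [/\ 0 <= alpha, 0 <= rr, 0 <= rd, 0 <= r0 & 0 <= Rt] by split; lra.
have Kmax_ge1 : 1 <= Kmax alpha rr rd rs r0 T by lra.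
have r0_twice_gt0 : 0 < 2 * r0 by lra.
set S := zeta_csi' alpha rr rd rs r0 T Rt.
have S_gt0 : 0 < S.
  have [one_ge1 one_lt2] := (lexx (1 : R), ltr1n R 2).
  apply: lt_le_trans (zeta_csi_le_sup _ _ _ _ _ one_ge1 Kmax_ge1 one_lt2) => //.
  exact: zeta_csi_gt0 one_ge1 one_lt2.
apply: le_lt_trans (div_divD_lt Rt_gt0 r0_twice_gt0 S_gt0) => //.
apply: ge_sup; first by exists (zeta_zf alpha rr rd rs r0 T 2 1 1 Rt), 2, 1, 1;
  do !split; lra.
move=> _ [M [K [tau [K_ge1 [K_le_Kmax [K_le_tau [tau_lt_T [K_lt_M ->]]]]]]]].
have zf_le := zeta_zf_le_zeta_csi alpha_ge0 rr_ge0 rd_ge0 hrs r0_ge0 Rt_gt0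
  K_ge1 K_le_tau tau_lt_T K_lt_M.
apply: le_trans zf_le (ler_div_divD Rt_gt0 (ltW r0_twice_gt0) _ _).
  exact: zeta_csi_gt0 K_ge1 K_lt_M.
exact: zeta_csi_le_sup Rt_ge0 K_ge1 K_le_Kmax K_lt_M.
Qed.
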